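(* Let $\Omega$ be a Polish space possessing a non-Borel subset $E\subset\Omega$ (e.g. $\Omega=\mathbb{R}$), and let $\mu$ be a Borel probability measure on $\Omega$. For $x\in E$ let $T_x:=\mathbb{1}_{\{x\}}\otimes\mu$, i.e. $T_x\nu=\nu(\{x\})\mu$. Then each $T_x$ is weakly continuous, the family $\{T_x:x\in E\}$ is bounded above by the weakly continuous operator $\mathbb{1}\otimes\mu$, but its supremum $\sup_{x\in E}T_x$ in $\mathscr{L}(\mathscr{M}(\Omega))$ is not weakly continuous. In particular $\mathscr{L}(\mathscr{M}(\Omega),\sigma)$ is not order complete in this sense.
   Context: $\mathscr{M}(\Omega)$ is the Banach lattice of finite signed Borel measures; $\mathscr{L}(\mathscr{M}(\Omega))$, the bounded operators on it ordered by positivity, is an order complete vector lattice. $T$ is weakly continuous if $(T\nu)(A)=\int k(x,A)\,d\nu(x)$ for a bounded transition kernel $k$ (map $\Omega\times\mathscr{B}(\Omega)\to\mathbb{R}$, signed measure in the second variable, Borel measurable in the first, $\sup_x\lvert k\rvert(x,\Omega)<\infty$); equivalently, the norm adjoint $T^*$ maps bounded Borel functions to bounded Borel functions. $\mathscr{L}(\mathscr{M}(\Omega),\sigma)$ is the space of weakly continuous operators; $(f\otimes\mu)\nu:=\left(\int f\,d\nu\right)\mu$. *)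

From HB Require Import structures.
From mathcomp Require Import all_boot all_order all_algebra.
From mathcomp Require Import all_classical all_reals all_analysis.
Set Implicit Arguments. Unset Strict Implicit. Unset Printing Implicit Defensive.
Import Order.TTheory GRing.Theory Num.Theory.
Import numFieldNormedType.Exports.
Local Open Scope classical_set_scope.
Local Open Scope ring_scope.

(** Polish space: here a complete separable metric space (Hausdorff complete
    pseudometric space with a countable dense subset). *)
Definition separable_space (T : topologicalType) : Prop :=
  exists D : set T, countable D /\ dense D.

Notation Borel Omega := (g_sigma_algebraType (@open Omega)).

Section MeasureOps.
Context {R : realType} {d : measure_display} {X : measurableType d}.

Local Open Scope ereal_scope.

(** the elements of M(Omega) are the charges (finite signed measures) *)
Notation meas := (charge X R).

Definition totvar (nu : meas) : \bar R :=
  ereal_sup [set s | exists (n : nat) (A : nat -> set X),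
    [/\ (forall i, measurable (A i)), trivIset setT A &
        s = \sum_(i < n) `|nu (A i)| ] ].

Definition pos_meas (nu : meas) : Prop := forall A, measurable A -> 0 <= nu A.

Definition cintegral (nu : meas) (P N : set X)
    (h : hahn_decomposition nu P N) (f : X -> \bar R) : \bar R :=
  \int[jordan_pos h]_x f x - \int[jordan_neg h]_x f x.

Definition operator := meas -> meas.

Definition op_linear (T : operator) : Prop :=
  forall (a : R) (nu eta : meas) (A : set X), measurable A ->
    T (cadd (cscale a nu) eta) A = a%:E * T nu A + T eta A.

Definition op_bounded (T : operator) : Prop :=
  exists C : R, forall nu : meas, totvar (T nu) <= C%:E * totvar nu.

Definition bounded_op (T : operator) : Prop := op_linear T /\ op_bounded T.

Definition op_le (S U : operator) : Prop :=
  forall nu : meas, pos_meas nu ->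
    forall A, measurable A -> S nu A <= U nu A.

Definition bounded_kernel (k : X -> meas) : Prop :=
  (forall A, measurable A -> measurable_fun setT (fun x => fine (k x A) : R)) /\
  exists C : R, forall x, totvar (k x) <= C%:E.

Definition weakly_continuous (T : operator) : Prop :=
  bounded_op T /\
  exists k : X -> meas, bounded_kernel k /\
    forall (nu : meas) (A : set X), measurable A ->
      forall (P N : set X) (h : hahn_decomposition nu P N),
        T nu A = cintegral h (fun x => k x A).

Definition op_sup {I : Type} (D : set I) (F : I -> operator) (S : operator) : Prop :=
  [/\ bounded_op S,
      (forall i, D i -> op_le (F i) S) &
      (forall U, bounded_op U -> (forall i, D i -> op_le (F i) U) -> op_le S U)].

(** (f ⊗ mu) nu = (∫ f dnu) mu, for f the indicator of B *)
Definition ind_tensor (B : set X) (mu : meas) : operator :=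
  fun nu => cscale (fine (nu B)) mu.

End MeasureOps.

(* The supremum of the operators 1_{x} ⊗ μ, x ∈ E, is c ⊗ μ with
   c ν = Σ_{x ∈ E} ν{x}, the absolutely convergent sum of the atoms of ν in E:
   c is linear and bounded by the total variation, and c ⊗ μ lies below every
   upper bound U, as one sees by splitting the atoms off a positive ν one at a
   time.  Any supremum S is squeezed between 1_{y} ⊗ μ and 1 ⊗ μ when y ∈ E, and
   lies below c ⊗ μ otherwise, so S(δ_y)(Ω) = 1_E(y).  If S had a kernel k, then
   y ↦ S(δ_y)(Ω) = k(y, Ω) would be Borel measurable, and so would E. *)

From HB Require Import structures.
From mathcomp Require Import all_boot all_order all_algebra.
From mathcomp Require Import all_classical all_reals all_analysis.
From mathcomp Require Import ring lra measurable_realfun.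
Import Order.TTheory GRing.Theory Num.Theory.
Local Open Scope classical_set_scope.
Local Open Scope ring_scope.

Lemma maxr0E {R : realDomainType} (x : R) : Num.max x 0 = x + Num.max (- x) 0.
Proof.
case: (leP 0 x) => x0; first by rewrite max_r ?addr0 // oppr_le0.
by rewrite max_l ?subrr // oppr_ge0 ltW.
Qed.

Lemma normr_maxr0 {R : realDomainType} (x : R) :
  `|x| = Num.max x 0 + Num.max (- x) 0.
Proof.
case: (leP 0 x) => x0; first by rewrite ger0_norm // max_r ?addr0 // oppr_le0.
by rewrite ltr0_norm // max_l ?add0r // oppr_ge0 ltW.
Qed.

Lemma maxr0_ge0 {R : realDomainType} (x : R) : 0 <= Num.max x 0.
Proof. by rewrite le_max lexx orbT. Qed.

Section signed_esum.
Context {R : realType} {T : choiceType} (D : set T).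
Implicit Types (f g : T -> R) (a : T -> \bar R).

Lemma esumZl (r : R) a : 0 <= r -> (forall i, 0 <= a i)%E ->
  (\esum_(i in D) (r%:E * a i) = r%:E * \esum_(i in D) a i)%E.
Proof.
move=> r0 a0; rewrite /esum -ereal_supZl //; last first.
  by apply/set0P; exists 0%E, set0 => //; [exact: fsets_set0|rewrite fsbig_set0].
congr ereal_sup; apply/seteqP; split => t.
- by move=> [F DF <-]; exists (\sum_(i \in F) a i)%E; [exists F|rewrite ge0_mule_fsumr].
- by move=> [_ [F DF <-] <-]; exists F => //; rewrite ge0_mule_fsumr.
Qed.

Definition esum_pos f := \esum_(i in D) (Num.max (f i) 0)%:E.

(* The sum over [D] for summable [f]; a junk value otherwise, as [fine +oo = 0]. *)
Definition signed_esum f : R := fine (esum_pos f) - fine (esum_pos (\- f)).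

Lemma esum_pos_ge0 f : (0 <= esum_pos f)%E.
Proof. by apply: esum_ge0 => i _; rewrite lee_fin maxr0_ge0. Qed.

Lemma summable_oppr {f} : summable D (EFin \o f) -> summable D (EFin \o (\- f)%R).
Proof. by rewrite summableN. Qed.

Lemma summable_esum_pos {f} : summable D (EFin \o f) -> esum_pos f \is a fin_num.
Proof.
move=> Sf; rewrite ge0_fin_numE ?esum_pos_ge0 //; apply: le_lt_trans Sf.
by apply: le_esum => i _; rewrite /= lee_fin ge_max ler_norm normr_ge0.
Qed.

Lemma esum_normr f :
  \esum_(i in D) `|f i|%:E = (esum_pos f + esum_pos (\- f)%R)%E.
Proof.
rewrite -esumD; try by move=> i _; rewrite lee_fin maxr0_ge0.
by apply: eq_esum => i _; rewrite normr_maxr0 EFinD.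
Qed.

Lemma signed_esumD f g : summable D (EFin \o f) -> summable D (EFin \o g) ->
  signed_esum (f \+ g) = signed_esum f + signed_esum g.
Proof.
move=> Sf Sg; have Sfg : summable D (EFin \o (f \+ g)) := summableD Sf Sg.
have key : (esum_pos (f \+ g)%R + (esum_pos (\- f)%R + esum_pos (\- g)%R) =
            esum_pos (\- (f \+ g))%R + (esum_pos f + esum_pos g))%E.
  rewrite /esum_pos -!esumD; first apply: eq_esum => i _.
    rewrite -!EFinD /= [in LHS](maxr0E (f i + g i)) (maxr0E (f i)) (maxr0E (g i)).
    by congr EFin; ring.
  all: try by move=> i _; rewrite ?adde_ge0 // lee_fin maxr0_ge0.
move: key.
rewrite -(fineK (summable_esum_pos Sf)) -(fineK (summable_esum_pos Sg)).
rewrite -(fineK (summable_esum_pos Sfg)).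
rewrite -(fineK (summable_esum_pos (summable_oppr Sf))).
rewrite -(fineK (summable_esum_pos (summable_oppr Sg))).
rewrite -(fineK (summable_esum_pos (summable_oppr Sfg))).
by rewrite -!EFinD => -[]; rewrite /signed_esum; lra.
Qed.

Lemma signed_esumN f : signed_esum (\- f) = - signed_esum f.
Proof.
rewrite /signed_esum opprB; congr (_ - fine _).
by apply: eq_esum => i _; rewrite /= opprK.
Qed.

Lemma esum_posZl f (r : R) : 0 <= r ->
  esum_pos (fun i => r * f i) = (r%:E * esum_pos f)%E.
Proof.
move=> r0; rewrite /esum_pos -esumZl //; last by move=> i; rewrite lee_fin maxr0_ge0.
by apply: eq_esum => i _; rewrite -EFinM maxr_pMr // mulr0.
Qed.

Lemma ge0_signed_esumZl f (r : R) : summable D (EFin \o f) -> 0 <= r ->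
  signed_esum (fun i => r * f i) = r * signed_esum f.
Proof.
move=> Sf r0; rewrite /signed_esum esum_posZl // [in RHS]mulrBr.
rewrite (_ : \- _ = (fun i => r * (\- f) i)); last first.
  by apply: funext => i; rewrite /= mulrN.
by rewrite esum_posZl // !fineM // ?summable_esum_pos ?summable_oppr.
Qed.

Lemma signed_esumZl f (r : R) : summable D (EFin \o f) ->
  signed_esum (fun i => r * f i) = r * signed_esum f.
Proof.
move=> Sf; case: (leP 0 r) => r0; first exact: ge0_signed_esumZl.
rewrite (_ : (fun i => _) = (fun i => - r * (\- f) i)); last first.
  by apply: funext => i; rewrite /= mulrNN.
by rewrite ge0_signed_esumZl ?signed_esumN ?mulrNN ?summable_oppr // oppr_ge0 ltW.
Qed.

Lemma ge0_signed_esum f : (forall i, D i -> 0 <= f i) ->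
  signed_esum f = fine (\esum_(i in D) (f i)%:E).
Proof.
move=> f0; rewrite /signed_esum (_ : esum_pos (\- f) = 0%E) ?subr0; last first.
  by apply: esum1 => i Di; rewrite max_r //= oppr_le0 f0.
by congr fine; apply: eq_esum => i Di; rewrite max_l // f0.
Qed.

Lemma ge0_le_signed_esum f x : summable D (EFin \o f) ->
  (forall i, D i -> 0 <= f i) -> D x -> f x <= signed_esum f.
Proof.
move=> Sf f0 Dx; rewrite ge0_signed_esum //.
have -> : \esum_(i in D) (f i)%:E = (\esum_(i in D) `|(EFin \o f) i|)%E.
  by apply: eq_esum => i Di; rewrite /= ger0_norm ?f0.
rewrite -lee_fin fineK -?summableE //; apply: esum_ge.
exists [set x]; first by split; [exact: finite_set1 | move=> y ->].
by rewrite fsbig_set1 /= ger0_norm ?f0.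
Qed.

Lemma normr_signed_esum_le f :
  (`|signed_esum f|%:E <= \esum_(i in D) `|f i|%:E)%E.
Proof.
have [Sf|] := boolP (summable D (EFin \o f)); last first.
  rewrite /summable ltey negbK => /eqP esumy.
  by rewrite (@eq_esum _ _ _ _ (abse \o (EFin \o f))) // esumy leey.
rewrite esum_normr -(fineK (summable_esum_pos Sf)).
rewrite -(fineK (summable_esum_pos (summable_oppr Sf))) -EFinD lee_fin.
apply: le_trans (ler_normB _ _) _.
by rewrite !ger0_norm ?fine_ge0 ?esum_pos_ge0.
Qed.

End signed_esum.

Section total_variation.
Context {R : realType} {d : measure_display} {X : measurableType d}.
Implicit Types (nu eta : charge X R) (A : set X).
Local Open Scope ereal_scope.

Lemma totvar_ge0 nu : 0 <= totvar nu.
Proof.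
apply: ereal_sup_ubound; exists 0%N, (fun=> set0); split => //.
- by move=> i j _ _; rewrite setI0 => -[].
- by rewrite big_ord0.
Qed.

Lemma abse_le_totvar nu A : measurable A -> `|nu A| <= totvar nu.
Proof.
move=> mA; apply: ereal_sup_ubound.
exists 1%N, (fun i => if i == 0%N then A else set0); split.
- by move=> i; case: ifP.
- apply/trivIsetP => i j _ _ ij.
  case: ifPn => [/eqP ?|_]; case: ifPn => [/eqP ?|_]; subst;
    by [rewrite ?setI0 ?set0I | rewrite eqxx in ij].
- by rewrite big_ord1.
Qed.

Lemma abse_le_jordan nu P N (h : hahn_decomposition nu P N) A : measurable A ->
  `|nu A| <= jordan_pos h A + jordan_neg h A.
Proof.
move=> mA; rewrite (jordan_decomp h mA) /cadd /= /cscale EFinN mulN1e.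
by apply: (le_trans (lee_abs_add _ _)); rewrite abseN !gee0_abs.
Qed.

Lemma totvar_lt_pinfty nu : totvar nu < +oo.
Proof.
have [P [N h]] := Hahn_decomposition nu.
apply: (@le_lt_trans _ _ (jordan_pos h setT + jordan_neg h setT)); last first.
  by rewrite ltey_eq fin_numD !fin_num_measure.
apply: ge_ereal_sup => _ [n [A [mA tA ->]]].
apply: (@le_trans _ _ (\sum_(i < n) (jordan_pos h (A i) + jordan_neg h (A i)))).
  by apply: lee_sum => i _; exact: abse_le_jordan.
rewrite big_split /= -!(measure_bigsetU _ mA tA).
by apply: leeD; apply: le_measure; rewrite ?inE //; exact: bigsetU_measurable.
Qed.

(* The difference of the two charges has total variation 0. *)
Lemma bounded_op_ext (U : operator) nu eta : bounded_op U ->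
  (forall A, measurable A -> nu A = eta A) ->
  forall A, measurable A -> U nu A = U eta A.
Proof.
move=> [linU [C boundU]] nu_eta A mA.
have tv0 : totvar (cadd (cscale (-1) eta) nu) = 0.
  apply/eqP; rewrite eq_le totvar_ge0 andbT.
  apply: ge_ereal_sup => _ [n [B [mB _ ->]]].
  rewrite big1 //= => i _; rewrite /cadd /= /cscale EFinN mulN1e nu_eta //.
  by rewrite addeC subee ?abse0 // fin_num_measure.
have U0 : U (cadd (cscale (-1) eta) nu) A = 0.
  apply/eqP; rewrite -abse_eq0 eq_le abse_ge0 andbT.
  apply: le_trans (abse_le_totvar _ _ mA) _.
  by apply: le_trans (boundU _) _; rewrite tv0 mule0.
move: (linU (-1)%R eta nu A mA); rewrite U0 EFinN mulN1e.
move: (fin_num_measure (U nu) _ mA) (fin_num_measure (U eta) _ mA).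
case: (U nu A) => // r1 _; case: (U eta A) => // r2 _.
by rewrite -EFinN -EFinD => -[e]; congr EFin; lra.
Qed.

End total_variation.

Section atoms.
Context {R : realType} {d : measure_display} {X : measurableType d}.
Hypothesis mset1 : forall x : X, measurable [set x].
Implicit Types (nu eta : charge X R) (D : set X).

Definition atom nu (x : X) : R := fine (nu [set x]).

Lemma atom_ge0 nu x : pos_meas nu -> 0 <= atom nu x.
Proof. by move=> nu0; apply/fine_ge0/nu0. Qed.

Lemma atom_cadd nu eta : atom (cadd nu eta) = atom nu \+ atom eta.
Proof.
apply: funext => x; rewrite /atom /cadd /=.
by rewrite fineD // fin_num_measure.
Qed.

Lemma atom_cscale a nu : atom (cscale a nu) = (fun x => a * atom nu x).
Proof.
by apply: funext => x; rewrite /atom /cscale /= fineM // fin_num_measure.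
Qed.

Lemma sum_abse_set1_le_totvar nu (s : seq X) : uniq s ->
  (\sum_(x <- s) `|nu [set x]| <= totvar nu)%E.
Proof.
case: s => [|x0 s] s_uniq; first by rewrite big_nil totvar_ge0.
apply: ereal_sup_ubound; exists (size (x0 :: s)),
  (fun i => if (i < size (x0 :: s))%N then [set nth x0 (x0 :: s) i] else set0).
split.
- by move=> i; case: ifP.
- move=> i j _ _ [y []]; case: ifP => [i_lt /= ->|_ //].
  by case: ifP => [j_lt /= /eqP|_ //]; rewrite nth_uniq // => /eqP.
- by rewrite (big_nth x0) big_mkord; apply: eq_bigr => i _; rewrite ltn_ord.
Qed.

Lemma esum_atom_le_totvar D nu :
  (\esum_(x in D) `|atom nu x|%:E <= totvar nu)%E.
Proof.
apply: ge_ereal_sup => _ [F [finF _] <-]; rewrite fsbig_finite //=.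
rewrite (eq_bigr (fun x => `|nu [set x]|)%E); last first.
  by move=> x _; rewrite /atom -abse_EFin fineK // fin_num_measure.
exact/sum_abse_set1_le_totvar/finmap.fset_uniq.
Qed.

Lemma summable_atom D nu : summable D (EFin \o atom nu).
Proof. exact: le_lt_trans (esum_atom_le_totvar D nu) (totvar_lt_pinfty nu). Qed.

Definition atomic_mass D nu : R := signed_esum D (atom nu).

Lemma atomic_mass_cadd D a nu eta :
  atomic_mass D (cadd (cscale a nu) eta) = a * atomic_mass D nu + atomic_mass D eta.
Proof.
rewrite /atomic_mass atom_cadd signed_esumD ?summable_atom //.
by rewrite atom_cscale signed_esumZl // summable_atom.
Qed.

Lemma normr_atomic_mass_le D nu : (`|atomic_mass D nu|%:E <= totvar nu)%E.
Proof. exact: le_trans (normr_signed_esum_le _ _) (esum_atom_le_totvar D nu). Qed.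

Lemma ge0_atomic_mass D nu : pos_meas nu ->
  atomic_mass D nu = fine (\esum_(x in D) (atom nu x)%:E).
Proof. by move=> nu0; apply: ge0_signed_esum => x _; exact: atom_ge0. Qed.

Lemma atom_le_atomic_mass D nu x : pos_meas nu -> D x -> atom nu x <= atomic_mass D nu.
Proof.
move=> nu0 Dx; apply: ge0_le_signed_esum => //; first exact: summable_atom.
by move=> y _; exact: atom_ge0.
Qed.

End atoms.

Section tensor.
Context {R : realType} {d : measure_display} {X : measurableType d}.
Variable mu : probability X R.
Local Notation muc := (charge_of_finite_measure mu).
Implicit Types (nu eta : charge X R) (c : charge X R -> R).

Definition tensor c (m : charge X R) : operator := fun nu => cscale (c nu) m.

Lemma totvar_cscale_probability r : (totvar (cscale r muc) <= `|r|%:E)%E.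
Proof.
apply: ge_ereal_sup => _ [n [A [mA tA ->]]].
rewrite (eq_bigr (fun i : 'I_n => `|r|%:E * mu (A i))%E); last first.
  by move=> i _; rewrite /cscale /= abseM abse_EFin gee0_abs.
rewrite -ge0_sume_distrr // -(measure_bigsetU _ mA tA) -[leRHS]mule1.
by apply: lee_wpmul2l; [rewrite lee_fin | exact/probability_le1/bigsetU_measurable].
Qed.

Lemma bounded_op_tensor c :
  (forall a nu eta, c (cadd (cscale a nu) eta) = a * c nu + c eta) ->
  (forall nu, (`|c nu|%:E <= totvar nu)%E) ->
  bounded_op (tensor c muc).
Proof.
move=> c_lin c_bound; split.
- move=> a nu eta A mA; rewrite /= /cscale /= c_lin.
  by rewrite -(fineK (fin_num_measure mu _ mA)) -!EFinM -EFinD mulrDl mulrA.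
- exists 1 => nu; rewrite mul1e.
  exact: le_trans (totvar_cscale_probability _) (c_bound nu).
Qed.

Lemma bounded_op_ind_tensor {B} : measurable B -> bounded_op (ind_tensor B muc).
Proof.
move=> mB; apply: bounded_op_tensor => [a nu eta|nu].
- rewrite /cadd /cscale /= fineD ?fin_numM ?fin_num_measure //.
  by rewrite fineM ?fin_num_measure.
- by rewrite -abse_EFin fineK ?abse_le_totvar ?fin_num_measure.
Qed.

Lemma op_le_tensor c1 c2 : (forall nu, pos_meas nu -> c1 nu <= c2 nu) ->
  op_le (tensor c1 muc) (tensor c2 muc).
Proof. by move=> c12 nu nu0 A mA; apply: lee_wpmul2r; rewrite ?lee_fin ?c12. Qed.

Lemma weakly_continuous_ind_tensor {B} : measurable B ->
  weakly_continuous (ind_tensor B muc).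
Proof.
move=> mB; split; first exact: bounded_op_ind_tensor.
have mind : measurable_fun setT (\1_B : X -> R) by exact: measurable_indic.
exists (fun y => cscale (\1_B y) muc); split.
- split=> [A mA|].
    rewrite (_ : (fun x => _) = (fun x => \1_B x * fine (mu A))); last first.
      by apply: funext => x; rewrite /cscale /= fineM // fin_num_measure.
    exact: measurable_funM.
  exists 1 => y; apply: le_trans (totvar_cscale_probability _) _.
  by rewrite lee_fin indicE; case: (y \in B); rewrite ?normr1 ?normr0.
- move=> nu A mA P N h; rewrite /cintegral /ind_tensor /= /cscale /=.
  have mind' : measurable_fun setT (fun x => (\1_B x : R)%:E).
    exact/measurable_EFinP.
  rewrite !ge0_integralZr // ?integral_indic ?setIT //.
  rewrite fineK ?fin_num_measure // (jordan_decomp h mB) /cadd /= /cscale EFinN mulN1e.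
  by rewrite muleBl ?fin_num_measure // fin_num_adde_defl // fin_numN fin_num_measure.
Qed.

End tensor.

Section dirac.
Context {R : realType} {d : measure_display} {X : measurableType d}.

Definition dirac_charge (y : X) : charge X R :=
  charge_of_finite_measure (@dirac _ X y R).

Lemma dirac_chargeE y A : dirac_charge y A = (\1_A y)%:E.
Proof. by rewrite /dirac_charge /= diracE. Qed.

Lemma dirac_charge_ge0 y : pos_meas (dirac_charge y).
Proof. by move=> A _; rewrite dirac_chargeE lee_fin indicE; case: (_ \in _). Qed.

Lemma hahn_decomposition_dirac y : hahn_decomposition (dirac_charge y) setT set0.
Proof.
split; rewrite ?setU0 ?setI0 //.
by split=> // A mA; rewrite subset0 => ->; rewrite charge0.
Qed.

(* [δ_y] has the trivial Hahn decomposition [(setT, set0)]. *)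
Lemma weakly_continuous_dirac (S : operator) (k : X -> charge X R) :
  bounded_kernel k ->
  (forall nu A, measurable A -> forall P N (h : hahn_decomposition nu P N),
    S nu A = cintegral h (fun x => k x A)) ->
  forall y A, measurable A -> S (dirac_charge y) A = k y A.
Proof.
move=> [k_meas _] S_kernel y A mA.
rewrite (S_kernel _ A mA _ _ (hahn_decomposition_dirac y)) /cintegral.
have mkA : measurable_fun setT (fun x => k x A).
  rewrite (_ : (fun x => _) = EFin \o (fun x => fine (k x A))).
    exact/measurable_EFinP/k_meas.
  by apply: funext => x /=; rewrite fineK // fin_num_measure.
rewrite (@eq_measure_integral _ _ _ setT (@dirac _ X y R)); last first.
  move=> B mB _; change (crestr0 (dirac_charge y) (@measurableT _ X) B = \d_y B).
  by rewrite /crestr0 mem_set // /crestr setIT.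
rewrite (@eq_measure_integral _ _ _ setT mzero
  (jordan_neg (hahn_decomposition_dirac y))); last first.
  move=> B mB _; change ((-1)%R%:E * crestr0 (dirac_charge y) (@measurable0 _ X) B = 0)%E.
  by rewrite /crestr0 mem_set // /crestr setI0 charge0 mule0.
by rewrite integral_measure_zero integral_dirac // diracT mul1e sube0.
Qed.

Lemma measurable_weakly_continuous_dirac (S : operator) A : measurable A ->
  weakly_continuous S -> measurable_fun setT (fun y => fine (S (dirac_charge y) A) : R).
Proof.
move=> mA [_ [k [k_bounded S_kernel]]].
rewrite (_ : (fun y => _) = (fun y => fine (k y A))); first exact: k_bounded.1.
by apply: funext => y; rewrite (weakly_continuous_dirac _ _ k_bounded S_kernel).
Qed.

End dirac.

Section atomic_supremum.
Context {R : realType} {d : measure_display} {X : measurableType d}.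
Hypothesis mset1 : forall x : X, measurable [set x].
Variables (mu : probability X R) (D : set X).
Local Notation muc := (charge_of_finite_measure mu).
Local Notation point_op x := (ind_tensor [set x] muc).
Local Notation atomic_sup := (tensor (atomic_mass D) muc).
Implicit Types (nu : charge X R) (U : @operator R d X).

Lemma bounded_op_atomic_sup : bounded_op atomic_sup.
Proof.
apply: bounded_op_tensor => [a nu eta|nu]; first exact: atomic_mass_cadd.
exact: normr_atomic_mass_le.
Qed.

Lemma point_op_le_atomic_sup x : D x -> op_le (point_op x) atomic_sup.
Proof. by move=> Dx; apply: op_le_tensor => nu nu0; exact: atom_le_atomic_mass. Qed.

Lemma point_op_le_ind_tensorT x : op_le (point_op x) (ind_tensor setT muc).
Proof.
apply: op_le_tensor => nu nu0; rewrite fine_le ?fin_num_measure //.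
rewrite (chargeDI nu measurableT (mset1 x)) setTI leeDr //.
exact/nu0/measurableD.
Qed.

Lemma crestr_ge0 {nu B} (mB : measurable B) : pos_meas nu -> pos_meas (crestr nu mB).
Proof. by move=> nu0 A mA; exact/nu0/measurableI. Qed.

(* Induction on the support: split [nu] into its restrictions to [[set x]] and
   to the complement, and use that [U] dominates [point_op x]. *)
Lemma sum_atoms_le_upper_bound U x0 (s : seq X) : bounded_op U ->
  (forall x, D x -> op_le (point_op x) U) -> D x0 ->
  uniq s -> (forall y, y \in s -> D y) -> forall nu, pos_meas nu -> forall A, measurable A ->
  ((\sum_(y <- s) atom nu y)%:E * mu A <= U nu A)%E.
Proof.
move=> U_bounded U_ub Dx0; elim: s => [|x s IHs] s_uniq sD nu nu0 A mA.
  rewrite big_nil mul0e; apply: le_trans (U_ub x0 Dx0 nu nu0 A mA).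
  by apply: mule_ge0; rewrite ?lee_fin ?atom_ge0.
move/andP: s_uniq => [xNs s_uniq].
pose nu1 := crestr nu (mset1 x).
pose nu2 := crestr nu (measurableC (mset1 x)).
have -> : U nu A = (U nu1 A + U nu2 A)%E.
  rewrite (@bounded_op_ext _ _ _ U nu (cadd (cscale 1 nu1) nu2)) //.
    by case: U_bounded => U_lin _; rewrite U_lin // mul1e.
  move=> B mB; rewrite /= /cadd /= /cscale /= mul1e /nu1 /nu2 /crestr.
  by apply: charge_partition; rewrite ?setUCr ?setICr //; exact: measurableC.
rewrite big_cons EFinD muleDl ?fin_num_measure //; apply: leeD.
- have Dx : D x by exact/sD/mem_head.
  apply: le_trans (U_ub x Dx nu1 (crestr_ge0 _ nu0) A mA).
  by rewrite /ind_tensor /= /cscale /nu1 /crestr setIid.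
- have sD' y : y \in s -> D y by move=> ys; apply: sD; rewrite in_cons ys orbT.
  apply: le_trans (IHs s_uniq sD' nu2 (crestr_ge0 _ nu0) A mA).
  rewrite (@eq_big_seq _ _ _ _ _ (atom nu) (atom nu2)) // => y ys.
  rewrite /atom /nu2 /crestr; congr (fine (nu _)); apply/seteqP; split=> z //=.
  - by move=> ->; split=> // yx; move: xNs; rewrite -yx ys.
  - by case.
Qed.

Lemma atomic_sup_least U : bounded_op U ->
  (forall x, D x -> op_le (point_op x) U) -> (exists x, D x) -> op_le atomic_sup U.
Proof.
move=> U_bounded U_ub [x0 Dx0] nu nu0 A mA; rewrite /= /cscale /= ge0_atomic_mass //.
have atom0 x : (0 <= (atom nu x)%:E)%E by rewrite lee_fin atom_ge0.
have esum_fin : \esum_(x in D) (atom nu x)%:E \is a fin_num.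
  rewrite (@eq_esum _ _ _ _ (abse \o (EFin \o atom nu))) -?summableE ?summable_atom //.
  by move=> x _; rewrite /= ger0_norm ?atom_ge0.
rewrite fineK // -(fineK (fin_num_measure mu _ mA)) muleC -esumZl ?fine_ge0 //.
apply: ge_ereal_sup => _ [F [finF FD] <-].
rewrite -ge0_mule_fsumr // fsbig_finite //= sumEFin muleC fineK ?fin_num_measure //.
apply: (sum_atoms_le_upper_bound _ _ _ U_bounded U_ub Dx0) => //.
  exact: finmap.fset_uniq.
by move=> y; rewrite in_fset_set // inE => /FD.
Qed.

Lemma op_sup_atomic_sup :
  (exists x, D x) -> op_sup D (fun x => point_op x) atomic_sup.
Proof.
split; [exact: bounded_op_atomic_sup | exact: point_op_le_atomic_sup |].
by move=> U U_bounded U_ub; exact: atomic_sup_least.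
Qed.

Lemma atomic_mass_dirac_notin y : ~ D y -> atomic_mass D (dirac_charge y) = 0 :> R.
Proof.
move=> Dy; rewrite ge0_atomic_mass ?dirac_charge_ge0 // esum1 // => x Dx.
have yx : ~ [set x] y by move=> yx; apply: Dy; rewrite yx.
by rewrite /atom dirac_chargeE indicE memNset.
Qed.

Lemma op_sup_diracT {S} : op_sup D (fun x => point_op x) S ->
  D = [set y | fine (S (dirac_charge y) setT) = 1].
Proof.
move=> [_ S_ub S_least]; apply/seteqP; split=> y /= => [Dy|Sy1].
  have lo := S_ub y Dy _ (dirac_charge_ge0 y) _ measurableT.
  have up := S_least _ (bounded_op_ind_tensor mu measurableT)
    (fun x _ => point_op_le_ind_tensorT x) _ (dirac_charge_ge0 y) _ measurableT.
  move: lo up; rewrite /ind_tensor /= /cscale /= !indicE !mem_set //.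
  rewrite probability_setT !mule1 => lo up.
  by have -> : S (dirac_charge y) setT = 1%E by apply: le_anti; rewrite lo up.
apply: contrapT => Dy.
have := S_least _ bounded_op_atomic_sup point_op_le_atomic_sup _ (dirac_charge_ge0 y)
  _ measurableT.
rewrite /= /cscale atomic_mass_dirac_notin // mul0e.
by rewrite -(fineK (fin_num_measure (S (dirac_charge y)) _ measurableT)) Sy1 lee_fin ler10.
Qed.

Lemma op_sup_not_weakly_continuous S : ~ measurable D ->
  op_sup D (fun x => point_op x) S -> ~ weakly_continuous S.
Proof.
move=> Dn S_sup S_wc; apply: Dn.
rewrite (op_sup_diracT S_sup) -[X in measurable X]setTI.
exact: (measurable_weakly_continuous_dirac _ _ measurableT S_wc) (measurable_set1 1).
Qed.

End atomic_supremum.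

Lemma borel_measurable_set1 {T : ptopologicalType} : hausdorff_space T ->
  forall x : T, measurable ([set x] : set (Borel T)).
Proof.
move=> T_haus x; rewrite -[[set x]]setCK; apply: measurableC.
apply: sub_gen_smallest; apply: closed_openC.
exact: accessible_closed_set1 (hausdorff_accessible T_haus) x.
Qed.

Theorem mainTheorem9 (R : realType) (Omega : completePseudoMetricType R)
  (HOmega : hausdorff_space Omega) (sepOmega : separable_space Omega)
  (E : set Omega) (hE : ~ measurable (E : set (Borel Omega)))
  (mu : probability (Borel Omega) R) :
  let muc := charge_of_finite_measure mu in
  let T := fun x : Omega => ind_tensor (X := Borel Omega) [set x] muc in
  [/\ (forall x, E x -> weakly_continuous (T x)),
      weakly_continuous (ind_tensor (X := Borel Omega) setT muc),
      (forall x, E x -> op_le (T x) (ind_tensor (X := Borel Omega) setT muc)),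
      (exists S, op_sup E T S) &
      (forall S, op_sup E T S -> ~ weakly_continuous S)].
Proof.
move=> muc T; have mset1 := borel_measurable_set1 HOmega.
have E_neq0 : exists x, E x.
  apply: contrapT => noE; apply: hE; rewrite (_ : E = set0) //.
  by apply/seteqP; split=> // y Ey; apply: noE; exists y.
split.
- by move=> x _; exact: weakly_continuous_ind_tensor.
- exact: weakly_continuous_ind_tensor.
- by move=> x _; exact: point_op_le_ind_tensorT.
- by exists (tensor (atomic_mass (X := Borel Omega) E) muc); exact: op_sup_atomic_sup.
- by move=> S; exact: op_sup_not_weakly_continuous.
Qed.
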